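(* There exists a chain $\mathcal{J}\subset\mathcal{L}$ (totally ordered by inclusion) with $|\mathcal{J}|=\mathfrak{c}$ such that all spaces $(\mathbb{R},\tau)$ with $\tau\in\mathcal{J}$ are completely metrizable and pairwise homeomorphic.
   Context: $\mathfrak{c}=|\mathbb{R}|$. $\eta$ denotes the Euclidean topology on $\mathbb{R}$. $\mathcal{L}$ denotes the family of all Hausdorff topologies $\tau$ on $\mathbb{R}$ with $\tau\subset\eta$. *)

From Stdlib Require Export Reals.
Open Scope R_scope.

Definition rset := R -> Prop.
Definition rtop := rset -> Prop.

Definition is_topology (tau : rtop) : Prop :=
  tau (fun _ => True) /\ tau (fun _ => False) /\
  (forall U V, tau U -> tau V -> tau (fun x => U x /\ V x)) /\
  (forall F : rset -> Prop, (forall U, F U -> tau U) ->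
     tau (fun x => exists U, F U /\ U x)).

Definition hausdorff (tau : rtop) : Prop :=
  forall x y : R, x <> y -> exists U V, tau U /\ tau V /\ U x /\ V y /\
    (forall z, ~ (U z /\ V z)).

Definition eta : rtop := fun U =>
  forall x, U x -> exists e, 0 < e /\ forall y, Rabs (y - x) < e -> U y.

Definition top_sub (tau sigma : rtop) : Prop := forall U, tau U -> sigma U.

Definition in_L (tau : rtop) : Prop :=
  is_topology tau /\ hausdorff tau /\ top_sub tau eta.

Definition is_metric (d : R -> R -> R) : Prop :=
  (forall x y, d x y = 0 <-> x = y) /\
  (forall x y, d x y = d y x) /\
  (forall x y z, d x z <= d x y + d y z).

Definition metric_open (d : R -> R -> R) : rtop := fun U =>
  forall x, U x -> exists e, 0 < e /\ forall y, d x y < e -> U y.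

Definition metric_complete (d : R -> R -> R) : Prop :=
  forall u : nat -> R,
    (forall e, 0 < e -> exists N, forall m n, (N <= m)%nat -> (N <= n)%nat ->
        d (u m) (u n) < e) ->
    exists l, forall e, 0 < e -> exists N, forall n, (N <= n)%nat -> d (u n) l < e.

Definition completely_metrizable (tau : rtop) : Prop :=
  exists d, is_metric d /\ metric_complete d /\
    (forall U, tau U <-> metric_open d U).

Definition homeomorphic (tau1 tau2 : rtop) : Prop :=
  exists f g : R -> R,
    (forall x, g (f x) = x) /\ (forall y, f (g y) = y) /\
    (forall U, tau2 U -> tau1 (fun x => U (f x))) /\
    (forall U, tau1 U -> tau2 (fun y => U (g y))).

Definition same_top (tau sigma : rtop) : Prop := forall U, tau U <-> sigma U.

(** For [0 < t < 1] let [tent t] vanish on [[0, t]] and be the tent [min (f - t) (1 - f)]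
    on [[t, 1]], and put
      [rho_t x = min (|x|, (tent t (frac x) + 1 / (1 + |x|)) / 2)],
      [d_t x y = min (|x - y|, rho_t x + rho_t y)].
    Since [rho_t] is 1-Lipschitz, nonnegative and vanishes only at [0], [d_t] is a complete
    metric, coarser than the Euclidean one: it glues the point [0] to the far-away parts of
    the intervals [[k, k + t]], where [rho_t] is small.  As [rho_t] decreases in [t], the
    topologies of the [d_t] form a chain, and it is strictly decreasing because the far
    points with fractional part in [(t, t')] are [d_t']-close but not [d_t]-close to [0].
    The map fixing the integers and stretching each [[k, k + t]] linearly onto [[k, k + t']]
    is bi-Lipschitz from [d_t] to [d_t'], so all these spaces are homeomorphic.  Finally
    [t] runs over the image of an increasing injection of [R] into [(0, 1)]. *)

From Stdlib Require Import Reals Lra Lia Classical.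
Open Scope R_scope.

Lemma Rabs_le_inv a b : Rabs a <= b -> - b <= a <= b.
Proof. unfold Rabs; destruct (Rcase_abs a); lra. Qed.

Lemma Rabs_eq0 x : Rabs x = 0 -> x = 0.
Proof. intros H; destruct (Req_dec x 0) as [|Hx]; [auto|now apply Rabs_no_R0 in Hx]. Qed.

Lemma Rabs_Rmin_sub_le a1 b1 a2 b2 c :
  Rabs (a1 - a2) <= c -> Rabs (b1 - b2) <= c -> Rabs (Rmin a1 b1 - Rmin a2 b2) <= c.
Proof.
  intros H1 H2; apply Rabs_le_inv in H1, H2; apply Rabs_le.
  unfold Rmin; destruct (Rle_dec a1 b1), (Rle_dec a2 b2); lra.
Qed.

Lemma Rmin_le_mult a b a' b' c :
  0 <= c -> a <= c * a' -> b <= c * b' -> Rmin a b <= c * Rmin a' b'.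
Proof.
  intros Hc Ha Hb; unfold Rmin at 2; destruct (Rle_dec a' b').
  - pose proof (Rmin_l a b); lra.
  - pose proof (Rmin_r a b); lra.
Qed.

Lemma frac_part_bounds x : 0 <= frac_part x < 1.
Proof. destruct (base_fp x); lra. Qed.

Lemma Int_part_frac_part_IZR_plus k t :
  0 <= t < 1 -> Int_part (IZR k + t) = k /\ frac_part (IZR k + t) = t.
Proof.
  intros Ht; destruct (Int_part_frac_part_spec (IZR k + t) k t Ht eq_refl); auto.
Qed.

Lemma Int_part_le_cases x y : x <= y ->
  Int_part x = Int_part y \/ IZR (Int_part x) + 1 <= IZR (Int_part y).
Proof.
  intros Hxy; destruct (base_Int_part x), (base_Int_part y).
  assert (Hlt : (Int_part x < Int_part y + 1)%Z)
    by (apply lt_IZR; rewrite plus_IZR; lra).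
  destruct (Z.eq_dec (Int_part x) (Int_part y)) as [E|E]; [now left|right].
  rewrite <- (plus_IZR _ 1); apply IZR_le; lia.
Qed.

Lemma lipschitz_comp_frac_part (G : R -> R) :
  (forall u v, 0 <= u <= 1 -> 0 <= v <= 1 -> Rabs (G u - G v) <= Rabs (u - v)) ->
  (forall f, 0 <= f <= 1 -> 0 <= G f /\ G f <= f /\ G f <= 1 - f) ->
  forall x y, Rabs (G (frac_part x) - G (frac_part y)) <= Rabs (x - y).
Proof.
  intros Glip Gtent.
  assert (Hle : forall x y, x <= y ->
            Rabs (G (frac_part x) - G (frac_part y)) <= Rabs (x - y)).
  { intros x y Hxy.
    pose proof (Rplus_Int_part_frac_part x); pose proof (Rplus_Int_part_frac_part y).
    pose proof (frac_part_bounds x); pose proof (frac_part_bounds y).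
    destruct (Int_part_le_cases x y Hxy) as [E|E].
    - replace (x - y) with (frac_part x - frac_part y) by (unfold frac_part; rewrite E; ring).
      apply Glip; lra.
    - (* across an integer, [y - x >= (1 - frac x) + frac y] bounds both values of [G] *)
      destruct (Gtent (frac_part x)) as [? [? ?]]; [lra|].
      destruct (Gtent (frac_part y)) as [? [? ?]]; [lra|].
      rewrite (Rabs_minus_sym x y), (Rabs_pos_eq (y - x)) by lra.
      apply Rabs_le; lra. }
  intros x y; destruct (Rle_dec x y) as [Hxy|Hxy]; [now apply Hle|].
  rewrite Rabs_minus_sym, (Rabs_minus_sym x); apply Hle; lra.
Qed.

Lemma metric_open_topology (d : R -> R -> R) : is_topology (metric_open d).
Proof.
  split; [|split; [|split]].
  - intros x _; exists 1; split; [lra|auto].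
  - intros x [].
  - intros U V HU HV x [Ux Vx].
    destruct (HU x Ux) as [e1 [He1 H1]], (HV x Vx) as [e2 [He2 H2]].
    exists (Rmin e1 e2); split; [now apply Rmin_glb_lt|].
    intros y Hy; pose proof (Rmin_l e1 e2); pose proof (Rmin_r e1 e2).
    split; [apply H1|apply H2]; lra.
  - intros F HF x [U [FU Ux]].
    destruct (HF U FU x Ux) as [e [He H]]; exists e; split; auto.
    intros y Hy; exists U; auto.
Qed.

Lemma metric_open_lipschitz_preimage (d1 d2 : R -> R -> R) (f : R -> R) (L : R) :
  0 < L -> (forall x y, d2 (f x) (f y) <= L * d1 x y) ->
  forall U, metric_open d2 U -> metric_open d1 (fun x => U (f x)).
Proof.
  intros HL Hf U HU x Ux; destruct (HU (f x) Ux) as [e [He H]].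
  exists (e / L); split; [now apply Rdiv_lt_0_compat|].
  intros y Hy; apply H.
  apply Rle_lt_trans with (L * d1 x y); [apply Hf|].
  apply (Rmult_lt_compat_l L) in Hy; [|lra].
  replace (L * (e / L)) with e in Hy by (field; lra); exact Hy.
Qed.

Lemma metric_open_sub_of_le (d1 d2 : R -> R -> R) :
  (forall x y, d2 x y <= d1 x y) -> top_sub (metric_open d2) (metric_open d1).
Proof.
  intros Hle U; apply (metric_open_lipschitz_preimage d1 d2 (fun x => x) 1); [lra|].
  intros x y; rewrite Rmult_1_l; apply Hle.
Qed.

Lemma homeomorphic_of_bilipschitz (d1 d2 : R -> R -> R) (f g : R -> R) (L M : R) :
  (forall x, g (f x) = x) -> (forall y, f (g y) = y) ->
  0 < L -> (forall x y, d2 (f x) (f y) <= L * d1 x y) ->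
  0 < M -> (forall x y, d1 (g x) (g y) <= M * d2 x y) ->
  homeomorphic (metric_open d1) (metric_open d2).
Proof.
  intros gf fg HL Hf HM Hg; exists f, g.
  repeat split; auto; intros U.
  - now apply (metric_open_lipschitz_preimage _ _ f L).
  - now apply (metric_open_lipschitz_preimage _ _ g M).
Qed.

Section Metric.

Variable d : R -> R -> R.
Hypothesis d_metric : is_metric d.

Lemma metric_refl x : d x x = 0.
Proof. now apply d_metric. Qed.

Lemma metric_ge0 x y : 0 <= d x y.
Proof.
  destruct d_metric as [_ [Hsym Htri]].
  pose proof (Htri x y x); rewrite (Hsym y x), metric_refl in *; lra.
Qed.

Lemma metric_ball_open x r : metric_open d (fun y => d x y < r).
Proof.
  destruct d_metric as [_ [_ Htri]].
  intros z Hz; exists (r - d x z); split; [lra|].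
  intros y Hy; pose proof (Htri x z y); lra.
Qed.

Lemma metric_open_hausdorff : hausdorff (metric_open d).
Proof.
  destruct d_metric as [Hzero [Hsym Htri]].
  intros x y Hxy.
  assert (Hpos : 0 < d x y).
  { destruct (metric_ge0 x y) as [h|h]; auto; exfalso; apply Hxy, Hzero; auto. }
  exists (fun z => d x z < d x y / 2), (fun z => d y z < d x y / 2).
  repeat split; try apply metric_ball_open; rewrite ?metric_refl; try lra.
  intros z [h1 h2]; pose proof (Htri x z y); rewrite (Hsym z y) in *; lra.
Qed.

End Metric.

(** * Pinching [R] at the zero of a 1-Lipschitz function *)

Definition pinch_dist (rho : R -> R) (x y : R) : R := Rmin (Rabs (x - y)) (rho x + rho y).

Lemma pinch_dist_le_abs rho x y : pinch_dist rho x y <= Rabs (x - y).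
Proof. apply Rmin_l. Qed.

Lemma pinch_dist_le_rho rho x y : pinch_dist rho x y <= rho x + rho y.
Proof. apply Rmin_r. Qed.

Lemma pinch_dist_mono (rho1 rho2 : R -> R) x y :
  (forall z, rho1 z <= rho2 z) -> pinch_dist rho1 x y <= pinch_dist rho2 x y.
Proof.
  intros H; unfold pinch_dist; rewrite <- (Rmult_1_l (Rmin _ (rho2 x + rho2 y))).
  apply Rmin_le_mult; pose proof (H x); pose proof (H y); lra.
Qed.

Lemma pinch_dist_comp_le (rho1 rho2 h : R -> R) (L : R) x y :
  0 <= L -> (forall x y, Rabs (h x - h y) <= L * Rabs (x - y)) ->
  (forall x, rho2 (h x) <= L * rho1 x) ->
  pinch_dist rho2 (h x) (h y) <= L * pinch_dist rho1 x y.
Proof.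
  intros HL Hh Hrho; apply Rmin_le_mult; auto.
  pose proof (Hrho x); pose proof (Hrho y); lra.
Qed.

Lemma pinch_ball0_not_open (rho1 rho2 : R -> R) (c : R) :
  0 < c -> rho1 0 = 0 -> rho2 0 = 0 ->
  (forall e, 0 < e -> exists y, rho2 y < e /\ c <= Rabs y /\ c <= rho1 y) ->
  ~ metric_open (pinch_dist rho2) (fun y => pinch_dist rho1 0 y < c).
Proof.
  intros Hc H1 H2 Hfar Hopen.
  assert (Hin : pinch_dist rho1 0 0 < c).
  { pose proof (pinch_dist_le_rho rho1 0 0); lra. }
  destruct (Hopen 0 Hin) as [e [He Hball]].
  destruct (Hfar e He) as [y [Hy2 [Hy Hy1]]].
  assert (Hnear : pinch_dist rho2 0 y < e).
  { pose proof (pinch_dist_le_rho rho2 0 y); lra. }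
  specialize (Hball y Hnear).
  assert (Hfar1 : c <= pinch_dist rho1 0 y).
  { apply Rmin_glb; rewrite ?Rminus_0_l, ?Rabs_Ropp; lra. }
  lra.
Qed.

Section Pinch.

Variable rho : R -> R.
Hypothesis rho_ge0 : forall x, 0 <= rho x.
Hypothesis rho_1lip : forall x y, Rabs (rho x - rho y) <= Rabs (x - y).
Hypothesis rho_eq0 : forall x, rho x = 0 <-> x = 0.

Lemma pinch_dist_0_r x : pinch_dist rho x 0 <= rho x.
Proof.
  pose proof (pinch_dist_le_rho rho x 0); rewrite (proj2 (rho_eq0 0) eq_refl) in *; lra.
Qed.

Lemma pinch_dist_eq_abs x y : pinch_dist rho x y < rho x -> pinch_dist rho x y = Rabs (x - y).
Proof.
  unfold pinch_dist, Rmin; intros H; pose proof (rho_ge0 y).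
  destruct (Rle_dec (Rabs (x - y)) (rho x + rho y)); lra.
Qed.

Lemma pinch_dist_metric : is_metric (pinch_dist rho).
Proof.
  unfold pinch_dist; split; [|split].
  - intros x y; split; [|intros ->; rewrite Rminus_diag, Rabs_R0; apply Rmin_left;
                         pose proof (rho_ge0 y); lra].
    unfold Rmin; destruct (Rle_dec (Rabs (x - y)) (rho x + rho y)); intros Hm.
    + apply Rminus_diag_uniq, Rabs_eq0; exact Hm.
    + pose proof (rho_ge0 x); pose proof (rho_ge0 y).
      rewrite (proj1 (rho_eq0 x)), (proj1 (rho_eq0 y)); lra.
  - intros x y; rewrite Rabs_minus_sym, Rplus_comm; reflexivity.
  - intros x y z.
    pose proof (Rabs_le_inv _ _ (rho_1lip x y)); pose proof (Rabs_le_inv _ _ (rho_1lip y z)).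
    pose proof (Rabs_triang (x - y) (y - z)); replace (x - y + (y - z)) with (x - z) in * by ring.
    pose proof (rho_ge0 x); pose proof (rho_ge0 y); pose proof (rho_ge0 z).
    pose proof (Rmin_l (Rabs (x - z)) (rho x + rho z));
    pose proof (Rmin_r (Rabs (x - z)) (rho x + rho z)).
    rewrite (Rabs_minus_sym x y), (Rabs_minus_sym y z) in *.
    unfold Rmin at 2 3; destruct (Rle_dec (Rabs (y - x)) (rho x + rho y)),
      (Rle_dec (Rabs (z - y)) (rho y + rho z)); lra.
Qed.

Lemma pinch_dist_complete : metric_complete (pinch_dist rho).
Proof.
  destruct pinch_dist_metric as [_ [Hsym Htri]].
  intros u Hu.
  destruct (classic (exists c, 0 < c /\ exists N, forall n, (N <= n)%nat -> c <= rho (u n)))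
    as [[c [Hc [N0 HN0]]] | Hsmall].
  - (* [rho] stays away from [0], so [u] is Cauchy for [|.|], which dominates the metric *)
    assert (Hcauchy : Cauchy_crit u).
    { intros e He; destruct (Hu (Rmin e c)) as [N HN]; [now apply Rmin_glb_lt|].
      exists (max N N0); intros n m Hn Hm; unfold Rdist.
      pose proof (HN n m ltac:(lia) ltac:(lia)); pose proof (HN0 n ltac:(lia)).
      pose proof (Rmin_l e c); pose proof (Rmin_r e c).
      rewrite <- pinch_dist_eq_abs; lra. }
    destruct (R_complete u Hcauchy) as [l Hl]; exists l; intros e He.
    destruct (Hl e He) as [N HN]; exists N; intros n Hn.
    pose proof (HN n Hn); pose proof (pinch_dist_le_abs rho (u n) l); unfold Rdist in *; lra.
  - (* otherwise [rho (u n)] is small for arbitrarily late [n], and [u] converges to [0] *)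
    exists 0; intros e He; destruct (Hu (e / 2)) as [N HN]; [lra|]; exists N.
    assert (Hn0 : exists n0, (N <= n0)%nat /\ rho (u n0) < e / 2).
    { apply NNPP; intros Hnot; apply Hsmall; exists (e / 2); split; [lra|]; exists N.
      intros n Hn; apply Rnot_lt_le; intros Hlt; apply Hnot; eauto. }
    destruct Hn0 as [n0 [Hn0 Hr]]; intros n Hn.
    pose proof (HN n n0 Hn Hn0); pose proof (Htri (u n) (u n0) 0).
    pose proof (pinch_dist_0_r (u n0)); lra.
Qed.

End Pinch.

(** * The metrics [d_t] *)

Definition tent (t f : R) : R := if Rle_dec f t then 0 else Rmin (f - t) (1 - f).

Definition decay (x : R) : R := / (1 + Rabs x).

Definition rho_th (t x : R) : R := Rmin (Rabs x) ((tent t (frac_part x) + decay x) / 2).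

Definition chain_dist (t : R) : R -> R -> R := pinch_dist (rho_th t).

Lemma tent_bounds t f : 0 <= t -> 0 <= f <= 1 ->
  0 <= tent t f /\ tent t f <= f /\ tent t f <= 1 - f.
Proof.
  intros Ht Hf; unfold tent; destruct (Rle_dec f t); [lra|].
  pose proof (Rmin_l (f - t) (1 - f)); pose proof (Rmin_r (f - t) (1 - f)).
  repeat split; try lra; apply Rmin_glb; lra.
Qed.

Lemma tent_1lip t u v : 0 <= u <= 1 -> 0 <= v <= 1 ->
  Rabs (tent t u - tent t v) <= Rabs (u - v).
Proof.
  intros Hu Hv; unfold tent.
  destruct (Rle_dec u t), (Rle_dec v t).
  - rewrite Rminus_0_r, Rabs_R0; apply Rabs_pos.
  - rewrite Rminus_0_l, Rabs_Ropp, Rabs_pos_eq by (apply Rmin_glb; lra).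
    pose proof (Rmin_l (v - t) (1 - v)); rewrite Rabs_minus_sym, Rabs_pos_eq; lra.
  - rewrite Rminus_0_r, Rabs_pos_eq by (apply Rmin_glb; lra).
    pose proof (Rmin_l (u - t) (1 - u)); rewrite Rabs_pos_eq; lra.
  - apply Rabs_Rmin_sub_le.
    + replace (u - t - (v - t)) with (u - v) by ring; lra.
    + replace (1 - u - (1 - v)) with (- (u - v)) by ring; rewrite Rabs_Ropp; lra.
Qed.

Lemma tent_anti t1 t2 f : t1 <= t2 -> 0 <= f <= 1 -> tent t2 f <= tent t1 f.
Proof.
  intros H Hf; unfold tent.
  destruct (Rle_dec f t2), (Rle_dec f t1); try lra.
  - apply Rmin_glb; lra.
  - apply Rle_min_compat_r; lra.
Qed.

Lemma decay_pos x : 0 < decay x.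
Proof. unfold decay; apply Rinv_0_lt_compat; pose proof (Rabs_pos x); lra. Qed.

Lemma decay_1lip x y : Rabs (decay x - decay y) <= Rabs (x - y).
Proof.
  unfold decay; pose proof (Rabs_pos x); pose proof (Rabs_pos y).
  replace (/ (1 + Rabs x) - / (1 + Rabs y))
    with ((Rabs y - Rabs x) * (/ (1 + Rabs x) * / (1 + Rabs y))) by (field; lra).
  assert (Hprod : 0 < / (1 + Rabs x) * / (1 + Rabs y) <= 1).
  { split; [apply Rmult_lt_0_compat; apply Rinv_0_lt_compat; lra|].
    rewrite <- Rinv_mult, <- Rinv_1; apply Rinv_le_contravar; nra. }
  rewrite Rabs_mult, (Rabs_pos_eq (_ * _)), Rabs_minus_sym by lra.
  pose proof (Rabs_triang_inv2 x y); pose proof (Rabs_pos (Rabs x - Rabs y)); nra.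
Qed.

Section RhoTheta.

Variable t : R.
Hypothesis Ht : 0 < t < 1.

Lemma tent_frac_part_bounds x :
  0 <= tent t (frac_part x) /\ tent t (frac_part x) <= 1.
Proof.
  pose proof (frac_part_bounds x).
  destruct (tent_bounds t (frac_part x)) as [? [? ?]]; lra.
Qed.

Lemma rho_th_ge0 x : 0 <= rho_th t x.
Proof.
  apply Rmin_glb; [apply Rabs_pos|].
  pose proof (tent_frac_part_bounds x); pose proof (decay_pos x); lra.
Qed.

Lemma rho_th_le_abs x : rho_th t x <= Rabs x.
Proof. apply Rmin_l. Qed.

Lemma rho_th_1lip x y : Rabs (rho_th t x - rho_th t y) <= Rabs (x - y).
Proof.
  apply Rabs_Rmin_sub_le; [apply Rabs_triang_inv2|].
  assert (Htent := lipschitz_comp_frac_part (tent t)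
                     (tent_1lip t) (fun f => tent_bounds t f ltac:(lra)) x y).
  pose proof (decay_1lip x y).
  replace ((tent t (frac_part x) + decay x) / 2 - (tent t (frac_part y) + decay y) / 2)
    with ((tent t (frac_part x) - tent t (frac_part y)) / 2 + (decay x - decay y) / 2)
    by field.
  eapply Rle_trans; [apply Rabs_triang|].
  unfold Rdiv; rewrite !Rabs_mult, (Rabs_pos_eq (/ 2)); lra.
Qed.

Lemma rho_th_eq0 x : rho_th t x = 0 <-> x = 0.
Proof.
  split.
  - unfold rho_th, Rmin; pose proof (tent_frac_part_bounds x); pose proof (decay_pos x).
    destruct (Rle_dec (Rabs x) _); intros Hm; [now apply Rabs_eq0 | lra].
  - intros ->; pose proof (rho_th_le_abs 0); pose proof (rho_th_ge0 0).
    rewrite Rabs_R0 in *; lra.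
Qed.

Lemma chain_dist_metric : is_metric (chain_dist t).
Proof. apply pinch_dist_metric; [exact rho_th_ge0 | exact rho_th_1lip | exact rho_th_eq0]. Qed.

Lemma chain_dist_complete : metric_complete (chain_dist t).
Proof. apply pinch_dist_complete; [exact rho_th_ge0 | exact rho_th_1lip | exact rho_th_eq0]. Qed.

End RhoTheta.

Lemma rho_th_anti t1 t2 x : t1 <= t2 -> rho_th t2 x <= rho_th t1 x.
Proof.
  intros H; apply Rle_min_compat_l.
  pose proof (tent_anti t1 t2 (frac_part x) H); pose proof (frac_part_bounds x).
  lra.
Qed.

Lemma rho_th_far_small t t' : 0 < t -> t < t' -> t' < 1 ->
  forall e, 0 < e -> exists y,
    rho_th t' y < e /\ (t' - t) / 4 <= Rabs y /\ (t' - t) / 4 <= rho_th t y.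
Proof.
  intros H1 H2 H3 e He.
  set (m := (t + t') / 2).
  set (y := IZR (up (1 + / e)) + m).
  assert (Hie : 0 < / e) by (apply Rinv_0_lt_compat; lra).
  assert (Hy : 1 + / e < y) by (destruct (archimed (1 + / e)); unfold y, m; lra).
  assert (Hay : Rabs y = y) by (apply Rabs_pos_eq; lra).
  assert (Hfrac : frac_part y = m)
    by (apply Int_part_frac_part_IZR_plus; unfold m; lra).
  assert (Hdecay : decay y < e).
  { unfold decay; rewrite Hay, <- (Rinv_inv e).
    apply Rinv_lt_contravar; [apply Rmult_lt_0_compat|]; lra. }
  pose proof (decay_pos y).
  exists y; unfold rho_th; rewrite Hfrac, Hay; repeat split.
  - unfold tent; destruct (Rle_dec m t'); [|unfold m in *; lra].
    pose proof (Rmin_r y ((0 + decay y) / 2)); lra.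
  - lra.
  - unfold tent; destruct (Rle_dec m t); [unfold m in *; lra|].
    assert ((t' - t) / 2 <= Rmin (m - t) (1 - m)) by (apply Rmin_glb; unfold m; lra).
    apply Rmin_glb; lra.
Qed.

(** * The stretching homeomorphisms *)

Definition knee (t t' f : R) : R :=
  if Rle_dec f t then f * (t' / t) else t' + (f - t) * ((1 - t') / (1 - t)).

Definition stretch (t t' x : R) : R := IZR (Int_part x) + knee t t' (frac_part x).

(* The slopes of [knee] are [t' / t] and [(1 - t') / (1 - t)]; the [2] absorbs the factor in
   [decay_stretch]. *)
Definition stretch_lip (t t' : R) : R := 2 + t' / t + (1 - t') / (1 - t).

Section Stretch.

Variables t t' : R.
Hypothesis Ht : 0 < t < 1.
Hypothesis Ht' : 0 < t' < 1.

Let s1 := t' / t.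
Let s2 := (1 - t') / (1 - t).

Let s1_eq : s1 * t = t'.
Proof. unfold s1; field; lra. Qed.

Let s2_eq : s2 * (1 - t) = 1 - t'.
Proof. unfold s2; field; lra. Qed.

Let s1_pos : 0 < s1.
Proof. unfold s1; apply Rdiv_lt_0_compat; lra. Qed.

Let s2_pos : 0 < s2.
Proof. unfold s2; apply Rdiv_lt_0_compat; lra. Qed.

Lemma stretch_lip_pos : 0 < stretch_lip t t'.
Proof. unfold stretch_lip; fold s1 s2; lra. Qed.

Lemma knee_range f : 0 <= f < 1 -> 0 <= knee t t' f < 1.
Proof. intros Hf; unfold knee; fold s1 s2; destruct (Rle_dec f t); nra. Qed.

Lemma knee_mono_lip u v : 0 <= u <= v -> v <= 1 ->
  0 <= knee t t' v - knee t t' u <= (s1 + s2) * (v - u).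
Proof.
  intros Huv Hv; unfold knee; fold s1 s2.
  destruct (Rle_dec u t), (Rle_dec v t); nra.
Qed.

Lemma knee_0 : knee t t' 0 = 0.
Proof. unfold knee; destruct (Rle_dec 0 t); [ring|lra]. Qed.

Lemma knee_1 : knee t t' 1 = 1.
Proof. unfold knee; fold s1 s2; destruct (Rle_dec 1 t); lra. Qed.

Lemma knee_tent f : 0 <= f < 1 -> tent t' (knee t t' f) <= s2 * tent t f.
Proof.
  intros Hf; unfold knee, tent; fold s1 s2.
  destruct (Rle_dec f t).
  - destruct (Rle_dec (f * s1) t'); [lra|nra].
  - destruct (Rle_dec (t' + (f - t) * s2) t'); [nra|].
    replace (t' + (f - t) * s2 - t') with (s2 * (f - t)) by ring.
    replace (1 - (t' + (f - t) * s2)) with (s2 * (1 - f)) by nra.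
    apply Rmin_le_mult; lra.
Qed.

Lemma knee_inv f : 0 <= f < 1 -> knee t' t (knee t t' f) = f.
Proof.
  intros Hf; unfold knee at 2; fold s1 s2; unfold knee.
  destruct (Rle_dec f t).
  - destruct (Rle_dec (f * s1) t'); [unfold s1; field; lra | nra].
  - destruct (Rle_dec (t' + (f - t) * s2) t'); [nra | unfold s2; field; lra].
Qed.

Lemma stretch_parts x :
  Int_part (stretch t t' x) = Int_part x /\
  frac_part (stretch t t' x) = knee t t' (frac_part x).
Proof. apply Int_part_frac_part_IZR_plus, knee_range, frac_part_bounds. Qed.

Lemma stretch_inv x : stretch t' t (stretch t t' x) = x.
Proof.
  destruct (stretch_parts x) as [E1 E2]; unfold stretch at 1.
  rewrite E1, E2, knee_inv by apply frac_part_bounds.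
  symmetry; apply Rplus_Int_part_frac_part.
Qed.

Lemma stretch_0 : stretch t t' 0 = 0.
Proof.
  unfold stretch; rewrite fp_R0, knee_0.
  replace 0 with (IZR 0 + 0) at 1 by (simpl; ring).
  rewrite (proj1 (Int_part_frac_part_IZR_plus 0 0 ltac:(lra))); simpl; ring.
Qed.

Lemma stretch_mono_lip x y : x <= y ->
  0 <= stretch t t' y - stretch t t' x <= stretch_lip t t' * (y - x).
Proof.
  intros Hxy; unfold stretch, stretch_lip; fold s1 s2.
  pose proof (Rplus_Int_part_frac_part x); pose proof (Rplus_Int_part_frac_part y).
  pose proof (frac_part_bounds x); pose proof (frac_part_bounds y).
  destruct (Int_part_le_cases x y Hxy) as [E|E].
  - assert (Ef : y - x = frac_part y - frac_part x) by (unfold frac_part; rewrite E; ring).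
    rewrite E; pose proof (knee_mono_lip (frac_part x) (frac_part y) ltac:(lra) ltac:(lra)).
    nra.
  - pose proof (knee_mono_lip 0 (frac_part y) ltac:(lra) ltac:(lra)).
    pose proof (knee_mono_lip (frac_part x) 1 ltac:(lra) ltac:(lra)).
    rewrite knee_0, knee_1 in *.
    nra.
Qed.

Lemma stretch_lipschitz x y :
  Rabs (stretch t t' x - stretch t t' y) <= stretch_lip t t' * Rabs (x - y).
Proof.
  destruct (Rle_dec x y).
  - pose proof (stretch_mono_lip x y r).
    rewrite Rabs_minus_sym, (Rabs_minus_sym x), !Rabs_pos_eq by lra; lra.
  - pose proof (stretch_mono_lip y x ltac:(lra)); rewrite !Rabs_pos_eq by lra; lra.
Qed.

Lemma decay_stretch x : decay (stretch t t' x) <= 2 * decay x.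
Proof.
  assert (Hnear : Rabs (x - stretch t t' x) <= 1).
  { pose proof (knee_range (frac_part x) (frac_part_bounds x)).
    pose proof (frac_part_bounds x); pose proof (Rplus_Int_part_frac_part x).
    unfold stretch; apply Rabs_le; lra. }
  pose proof (Rabs_triang (stretch t t' x) (x - stretch t t' x)).
  replace (stretch t t' x + (x - stretch t t' x)) with x in * by ring.
  pose proof (Rabs_pos x); pose proof (Rabs_pos (stretch t t' x)).
  unfold decay; replace (2 * / (1 + Rabs x)) with (/ ((1 + Rabs x) / 2)) by (field; lra).
  apply Rinv_le_contravar; lra.
Qed.

Lemma rho_th_stretch x : rho_th t' (stretch t t' x) <= stretch_lip t t' * rho_th t x.
Proof.
  assert (HL : 2 + s2 <= stretch_lip t t') by (unfold stretch_lip; fold s1 s2; lra).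
  apply Rmin_le_mult; [lra| |].
  - pose proof (stretch_lipschitz x 0); rewrite stretch_0, !Rminus_0_r in *; auto.
  - destruct (stretch_parts x) as [_ E]; rewrite E.
    pose proof (knee_tent (frac_part x) (frac_part_bounds x)).
    pose proof (decay_stretch x); pose proof (decay_pos x).
    pose proof (tent_frac_part_bounds t Ht x).
    nra.
Qed.

Lemma chain_dist_stretch x y :
  chain_dist t' (stretch t t' x) (stretch t t' y) <= stretch_lip t t' * chain_dist t x y.
Proof.
  apply pinch_dist_comp_le; [pose proof stretch_lip_pos; lra|
                             exact stretch_lipschitz | exact rho_th_stretch].
Qed.

End Stretch.

Definition chain_top (t : R) : rtop := metric_open (chain_dist t).

Lemma chain_top_in_L t : 0 < t < 1 -> in_L (chain_top t).
Proof.
  intros Ht; split; [apply metric_open_topology | split].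
  - apply metric_open_hausdorff, chain_dist_metric, Ht.
  - apply (metric_open_sub_of_le (fun x y => Rabs (y - x))).
    intros x y; rewrite Rabs_minus_sym; apply pinch_dist_le_abs.
Qed.

Lemma chain_top_anti t1 t2 : t1 <= t2 -> top_sub (chain_top t2) (chain_top t1).
Proof.
  intros H; apply metric_open_sub_of_le; intros x y.
  apply pinch_dist_mono; intros z; apply rho_th_anti, H.
Qed.

Lemma chain_top_strict t t' : 0 < t -> t < t' -> t' < 1 ->
  exists U, chain_top t U /\ ~ chain_top t' U.
Proof.
  intros H1 H2 H3; exists (fun y => chain_dist t 0 y < (t' - t) / 4); split.
  - apply metric_ball_open, chain_dist_metric; lra.
  - apply pinch_ball0_not_open; [lra | apply rho_th_eq0; lra.. |].
    now apply rho_th_far_small.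
Qed.

Lemma chain_top_inj t t' : 0 < t < 1 -> 0 < t' < 1 ->
  same_top (chain_top t) (chain_top t') -> t = t'.
Proof.
  intros Ht Ht' Hsame; destruct (Rtotal_order t t') as [Hlt|[Heq|Hlt]]; auto; exfalso.
  - destruct (chain_top_strict t t') as [U [HU HnU]]; try lra.
    now apply HnU, Hsame.
  - destruct (chain_top_strict t' t) as [U [HU HnU]]; try lra.
    now apply HnU, Hsame.
Qed.

Lemma chain_top_completely_metrizable t : 0 < t < 1 -> completely_metrizable (chain_top t).
Proof.
  intros Ht; exists (chain_dist t).
  split; [now apply chain_dist_metric | split; [now apply chain_dist_complete |]].
  intros U; apply iff_refl.
Qed.

Lemma chain_top_homeomorphic t t' : 0 < t < 1 -> 0 < t' < 1 ->
  homeomorphic (chain_top t) (chain_top t').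
Proof.
  intros Ht Ht'.
  apply (homeomorphic_of_bilipschitz _ _ (stretch t t') (stretch t' t)
           (stretch_lip t t') (stretch_lip t' t));
    auto using stretch_inv, stretch_lip_pos, chain_dist_stretch.
Qed.

Definition squash (a : R) : R := (atan a + PI / 2) / PI.

Lemma squash_range a : 0 < squash a < 1.
Proof.
  pose proof (atan_bound a); pose proof PI_RGT_0; unfold squash; split.
  - apply Rdiv_lt_0_compat; lra.
  - apply (Rmult_lt_reg_r PI); [lra|]; unfold Rdiv.
    rewrite Rmult_assoc, Rinv_l by lra; lra.
Qed.

Lemma squash_lt a b : a < b -> squash a < squash b.
Proof.
  intros H; pose proof (atan_increasing a b H); pose proof PI_RGT_0; unfold squash, Rdiv.
  apply Rmult_lt_compat_r; [apply Rinv_0_lt_compat|]; lra.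
Qed.

Lemma squash_le a b : a <= b -> squash a <= squash b.
Proof. intros [H|<-]; [left; now apply squash_lt | apply Rle_refl]. Qed.

Lemma squash_inj a b : squash a = squash b -> a = b.
Proof.
  intros H; destruct (Rtotal_order a b) as [Hab|[Hab|Hab]]; auto;
    apply squash_lt in Hab; lra.
Qed.

Theorem proposition7 :
  exists T : R -> rtop,
    (forall a b, same_top (T a) (T b) -> a = b) /\
    (forall a, in_L (T a)) /\
    (forall a b, top_sub (T a) (T b) \/ top_sub (T b) (T a)) /\
    (forall a, completely_metrizable (T a)) /\
    (forall a b, homeomorphic (T a) (T b)).
Proof.
  exists (fun a => chain_top (squash a)).
  split; [|split; [|split; [|split]]].
  - intros a b Hsame; apply squash_inj.
    exact (chain_top_inj _ _ (squash_range a) (squash_range b) Hsame).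
  - intros a; apply chain_top_in_L, squash_range.
  - intros a b; destruct (Rle_dec a b) as [Hab|Hab]; [right|left];
      apply chain_top_anti, squash_le; lra.
  - intros a; apply chain_top_completely_metrizable, squash_range.
  - intros a b; apply chain_top_homeomorphic; apply squash_range.
Qed.
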